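(* Let $\mathcal{G}\rightrightarrows M$ be a Lie groupoid and let $\overline{(\mathcal{G},\mathcal{G})}$ be the closure in $\mathcal{G}$ of $(\mathcal{G},\mathcal{G})=\bigcup_{x\in M}(\mathcal{G}_x,\mathcal{G}_x)$. If $\overline{(\mathcal{G},\mathcal{G})}$ is a subgroupoid of $\mathcal{G}$, then it is a normal subgroupoid, i.e. $h\,g\,h^{-1}\in\overline{(\mathcal{G},\mathcal{G})}$ for all $g\in\overline{(\mathcal{G},\mathcal{G})}$ and $h\in\mathcal{G}$ with $s(h)=t(g)$.
   Context: $\mathcal{G}_x=s^{-1}(x)\cap t^{-1}(x)$ is the isotropy group at $x$ and $(\mathcal{G}_x,\mathcal{G}_x)$ its commutator subgroup. Lie groupoids need not have Hausdorff arrow space; $s,t$ are submersions. *)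

From HB Require Import structures.
From mathcomp Require Import all_boot all_order all_algebra.
From mathcomp Require Import all_classical all_reals all_analysis.
Set Implicit Arguments. Unset Strict Implicit. Unset Printing Implicit Defensive.
Local Open Scope classical_set_scope.

(* A groupoid G ⇉ M with source s, target t, units u, inverse inv and
   composition mul g h = g h, defined (meaningfully) when s g = t h. *)
Record groupoid (G M : Type) := Groupoid {
  gs : G -> M;
  gt : G -> M;
  gu : M -> G;
  ginv : G -> G;
  gmul : G -> G -> G;
  gs_u : forall x, gs (gu x) = x;
  gt_u : forall x, gt (gu x) = x;
  gs_mul : forall g h, gs g = gt h -> gs (gmul g h) = gs h;
  gt_mul : forall g h, gs g = gt h -> gt (gmul g h) = gt g;
  gmulA : forall f g h, gs f = gt g -> gs g = gt h ->
    gmul f (gmul g h) = gmul (gmul f g) h;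
  gmul_u_l : forall g, gmul (gu (gt g)) g = g;
  gmul_u_r : forall g, gmul g (gu (gs g)) = g;
  gs_inv : forall g, gs (ginv g) = gt g;
  gt_inv : forall g, gt (ginv g) = gs g;
  gmulVg : forall g, gmul (ginv g) g = gu (gs g);
  gmulgV : forall g, gmul g (ginv g) = gu (gt g)
}.

Definition has_local_sections (G M : topologicalType) (f : G -> M) : Prop :=
  forall g : G, exists (U : set M) (sigma : M -> G),
    [/\ open U, U (f g), {within U, continuous sigma}, sigma (f g) = g &
        forall y, U y -> f (sigma y) = y].

(* A "Lie-type" topological groupoid: all structure maps continuous,
   composition continuous on composable pairs, M Hausdorff, and s, t admit
   local continuous sections (as submersions do).  G need not be Hausdorff. *)
Record lie_type_groupoid (G M : topologicalType) := LieTypeGroupoid {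
  lg :> groupoid G M;
  lg_hausM : hausdorff_space M;
  lg_cont_s : continuous (gs lg);
  lg_cont_t : continuous (gt lg);
  lg_cont_u : continuous (gu lg);
  lg_cont_inv : continuous (ginv lg);
  lg_cont_mul : {within [set p : G * G | gs lg p.1 = gt lg p.2],
                   continuous (fun p : G * G => gmul lg p.1 p.2)};
  lg_sections_s : has_local_sections (gs lg);
  lg_sections_t : has_local_sections (gt lg)
}.

Section Comm.
Variables (G M : Type) (GG : groupoid G M).

Definition isotropy (x : M) : set G := [set g | gs GG g = x /\ gt GG g = x].

Definition gcomm (a b : G) : G :=
  gmul GG (gmul GG (gmul GG a b) (ginv GG a)) (ginv GG b).

Inductive in_comm_subgroup (x : M) : G -> Prop :=
| ics_unit : in_comm_subgroup x (gu GG x)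
| ics_step : forall a b g, isotropy x a -> isotropy x b ->
    in_comm_subgroup x g -> in_comm_subgroup x (gmul GG (gcomm a b) g).

Definition comm_all : set G := \bigcup_(x in [set: M]) (in_comm_subgroup x).
End Comm.

(* Conjugation by an arrow k maps (G_(s k), G_(s k)) onto (G_(t k), G_(t k)),
   so (G,G) is invariant under conjugation.  Invariance passes to the closure
   because s, having local sections, is open: for g' in (G,G) close to g,
   t g' is close to t g = s h, hence equals s k for some k close to h, and then
   k g' k^-1 is close to h g h^-1.  Arrows of the closure are isotropic because
   M is Hausdorff, so these conjugates are defined. *)
From mathcomp Require Import all_boot all_order all_algebra.
From mathcomp Require Import all_classical all_reals all_analysis.
Set Implicit Arguments. Unset Strict Implicit. Unset Printing Implicit Defensive.
Local Open Scope classical_set_scope.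

Ltac solve_ends :=
  repeat match goal with
  | |- context [gs ?GG (gmul ?GG ?g ?h)] => rewrite (@gs_mul _ _ GG g h ltac:(solve_ends))
  | |- context [gt ?GG (gmul ?GG ?g ?h)] => rewrite (@gt_mul _ _ GG g h ltac:(solve_ends))
  | |- context [gs ?GG (ginv ?GG ?g)] => rewrite (@gs_inv _ _ GG g)
  | |- context [gt ?GG (ginv ?GG ?g)] => rewrite (@gt_inv _ _ GG g)
  | |- context [gs ?GG (gu ?GG ?g)] => rewrite (@gs_u _ _ GG g)
  | |- context [gt ?GG (gu ?GG ?g)] => rewrite (@gt_u _ _ GG g)
  end; congruence.

Ltac rewrite_gmulA GG f g h := rewrite (@gmulA _ _ GG f g h ltac:(solve_ends) ltac:(solve_ends)).
Ltac rewrite_gmulA_rev GG f g h := rewrite -(@gmulA _ _ GG f g h ltac:(solve_ends) ltac:(solve_ends)).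

Section GroupoidConjugation.
Variables (G M : Type) (GG : groupoid G M).
Local Notation m := (gmul GG).
Local Notation i := (ginv GG).
Local Notation s := (gs GG).
Local Notation t := (gt GG).

Definition gconj k a := m (m k a) (i k).

Lemma gmul_eq_u_inv g h : s g = t h -> m g h = gu GG (s h) -> g = i h.
Proof.
move=> sgth gh1.
rewrite -[g](gmul_u_r GG) sgth -(gmulgV GG h).
rewrite_gmulA GG g h (i h); rewrite gh1.
by rewrite -(gt_inv GG h) gmul_u_l.
Qed.

Lemma gconjM k a b : isotropy GG (s k) a -> isotropy GG (s k) b ->
  gconj k (m a b) = m (gconj k a) (gconj k b).
Proof.
move=> [sa ta] [sb tb]; rewrite /gconj.
rewrite_gmulA_rev GG (m k a) (i k) (m (m k b) (i k)).
rewrite_gmulA GG (i k) (m k b) (i k).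
rewrite_gmulA GG (i k) k b.
rewrite gmulVg -tb gmul_u_l.
rewrite_gmulA GG (m k a) b (i k).
by rewrite_gmulA_rev GG k a b.
Qed.

Lemma gconjV k a : isotropy GG (s k) a -> gconj k (i a) = i (gconj k a).
Proof.
move=> [sa ta]; apply: gmul_eq_u_inv; first by rewrite /gconj; solve_ends.
rewrite -gconjM; try by split; solve_ends.
rewrite gmulVg /gconj sa gmul_u_r gmulgV.
by congr (gu GG); solve_ends.
Qed.

Lemma gconj_comm k a b : isotropy GG (s k) a -> isotropy GG (s k) b ->
  gconj k (gcomm GG a b) = gcomm GG (gconj k a) (gconj k b).
Proof.
move=> [sa ta] [sb tb].
by rewrite /gcomm !gconjM ?gconjV //; split; solve_ends.
Qed.

Lemma in_comm_subgroup_isotropy {x g} : in_comm_subgroup GG x g -> isotropy GG x g.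
Proof.
elim=> [|a b g' [? ?] [? ?] _ [? ?]]; first by split; [exact: gs_u | exact: gt_u].
by split; rewrite /gcomm; solve_ends.
Qed.

Lemma in_comm_subgroup_conj k g :
  in_comm_subgroup GG (s k) g -> in_comm_subgroup GG (t k) (gconj k g).
Proof.
elim=> [|a b g' [? ?] [? ?] g'_comm IH].
  by rewrite /gconj gmul_u_r gmulgV; constructor.
have [? ?] := in_comm_subgroup_isotropy g'_comm.
rewrite gconjM ?gconj_comm //; try by split; rewrite /gcomm; solve_ends.
by constructor => //; split; rewrite /gconj; solve_ends.
Qed.

Lemma comm_all_isotropic g : comm_all GG g -> s g = t g.
Proof. by case=> x _ /in_comm_subgroup_isotropy [-> ->]. Qed.

Lemma comm_all_conj k g : comm_all GG g -> s k = t g -> comm_all GG (gconj k g).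
Proof.
case=> x _ gx skg; have [sg tg] := in_comm_subgroup_isotropy gx.
exists (t k) => //; apply: in_comm_subgroup_conj; congruence.
Qed.

End GroupoidConjugation.

Lemma local_sections_nbhs_image (G M : topologicalType) (f : G -> M) g A :
  has_local_sections f -> nbhs g A -> nbhs (f g) (f @` A).
Proof.
move=> /(_ g) [U [sigma [oU Ufg csigma sigma_fg fsigma]]] gA.
have : nbhs (sigma (f g)) A by rewrite sigma_fg.
move=> /((subspace_continuousP _ _).1 csigma (f g) Ufg); rewrite /= nbhs_simpl.
move=> sigmaA; have fgU : nbhs (f g) U by apply: open_nbhs_nbhs.
apply: filterS (filterI fgU sigmaA) => y [Uy /(_ Uy) Ay].
by exists (sigma y); rewrite ?fsigma.
Qed.

Section LieTypeGroupoid.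
Variables (G M : topologicalType) (GG : lie_type_groupoid G M).
Local Notation m := (gmul GG).
Local Notation i := (ginv GG).
Local Notation s := (gs GG).
Local Notation t := (gt GG).

Lemma gmul_nbhs a b V : s a = t b -> nbhs (m a b) V ->
  exists A B, [/\ nbhs a A, nbhs b B &
    forall a' b', A a' -> B b' -> s a' = t b' -> V (m a' b')].
Proof.
move=> sab abV.
have := (subspace_continuousP _ _).1 (@lg_cont_mul _ _ GG) (a, b) sab V abV.
rewrite /= nbhs_simpl /= => -[[A B] /= [aA bB] AB_V].
by exists A, B; split => // a' b' Aa' Bb' sab'; apply: (AB_V (a', b')).
Qed.

Lemma gconj_nbhs h g V : s h = t g -> s g = t g -> nbhs (gconj GG h g) V ->
  exists A B, [/\ nbhs h A, nbhs g B & forall h' g', A h' -> B g' ->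
    s h' = t g' -> s g' = t g' -> V (gconj GG h' g')].
Proof.
move=> shg sg hgV.
have shg_ih : s (m h g) = t (i h) by solve_ends.
have [A1 [B1 [hgA1 ihB1 A1B1_V]]] := gmul_nbhs shg_ih hgV.
have [A2 [B2 [hA2 gB2 A2B2_A1]]] := gmul_nbhs shg hgA1.
have hB1 : nbhs h (i @^-1` B1) by apply: (@lg_cont_inv _ _ GG).
exists (A2 `&` i @^-1` B1), B2; split; [exact: filterI|exact: gB2|].
move=> h' g' [A2h' B1h'] B2g' sh' sg'.
by apply: A1B1_V => //; [apply: A2B2_A1|solve_ends].
Qed.

Lemma closure_isotropic (S : set G) :
  (forall g, S g -> s g = t g) -> forall g, closure S g -> s g = t g.
Proof.
move=> S_iso g Sg; apply: (@lg_hausM _ _ GG) => A B sgA tgB.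
have gA : nbhs g (s @^-1` A) by apply: (@lg_cont_s _ _ GG).
have gB : nbhs g (t @^-1` B) by apply: (@lg_cont_t _ _ GG).
have [g' [/S_iso sg' [Ag' Bg']]] := Sg _ (filterI gA gB).
by exists (s g'); split; rewrite // sg'.
Qed.

Lemma closure_conj (S : set G) :
  (forall g, S g -> s g = t g) ->
  (forall k g, S g -> s k = t g -> S (gconj GG k g)) ->
  forall h g, closure S g -> s h = t g -> closure S (gconj GG h g).
Proof.
move=> S_iso S_conj h g Sg shg V hgV.
have sg := closure_isotropic S_iso Sg.
have [A [B [hA gB AB_V]]] := gconj_nbhs shg sg hgV.
have sA : nbhs (t g) (s @` A).
  by rewrite -shg; apply: local_sections_nbhs_image (@lg_sections_s _ _ GG) hA.
have gsA : nbhs g (t @^-1` (s @` A)) by apply: (@lg_cont_t _ _ GG).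
have [g' [Sg' [Bg' [k Ak skg']]]] := Sg _ (filterI gB gsA).
exists (gconj GG k g'); split; first exact: S_conj.
by apply: AB_V => //; apply: S_iso.
Qed.

End LieTypeGroupoid.

Theorem mainTheorem12 (G M : topologicalType) (GG : lie_type_groupoid G M) :
  let C := closure (comm_all GG) in
  (forall g h, C g -> C h -> gs GG g = gt GG h -> C (gmul GG g h)) ->
  (forall g, C g -> C (ginv GG g)) ->
  forall g h, C g -> gs GG h = gt GG g ->
    C (gmul GG (gmul GG h g) (ginv GG h)).
Proof.
move=> C _ _ g h Cg shg.
exact: (closure_conj (@comm_all_isotropic _ _ GG) (@comm_all_conj _ _ GG) Cg shg).
Qed.
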